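(* Let $x^*=\{x_i^{*t}\}$ be the output of the greedy fractional algorithm and let $y=\{y_i^t\}$ be an arbitrary fractional allocation. Then for every block $t$, $$\sum_i x_i^{*t}v_i^t\ge\sum_i\big(1-X_i^{*t-1}\big)y_i^tv_i^t,$$ where $X_i^{*t}=\sum_{\tau\le t}x_i^{*\tau}$.
   Context: Online block packing: $m$ resources with capacities $B_j>0$; transactions $i$ with arrival time $a_i\in\{1,2,\dots\}$, base value $v_i\ge0$, discount $\rho_i\in[0,1]$, demand $w_i\in\mathbb{R}_+^m$; $v_i^t:=v_i(1-\rho_i)^{t-a_i}$. A fractional allocation is $\{x_i^t\}$ with $x_i^t\in[0,1]$, $x_i^t=0$ for $t<a_i$, $\sum_tx_i^t\le1$, and $\sum_iw_{ij}x_i^t\le B_j$ for all $t,j$. The greedy fractional algorithm: at each $t=1,2,\dots$ it sets $\{x_i^{*t}\}_i$ to an optimal solution of the LP maximizing $\sum_ix_i^{*t}v_i^t$ subject to $0\le x_i^{*t}\le1-\sum_{\tau<t}x_i^{*\tau}$, $\sum_iw_{ij}x_i^{*t}\le B_j$ for all $j$, and $x_i^{*t}=0$ if $a_i>t$. *)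

From mathcomp Require Import all_boot all_order all_algebra.
Set Implicit Arguments. Unset Strict Implicit. Unset Printing Implicit Defensive.
Import Order.TTheory GRing.Theory Num.Theory.
Local Open Scope ring_scope.

(* Instance: n transactions (indexed by 'I_n), m resources (indexed by 'I_m).
   Times (blocks) are natural numbers t >= 1; an allocation is a function
   x : nat -> 'I_n -> R, with x t i the fraction of transaction i in block t. *)

Section Defs.
Variables (R : realFieldType) (n m : nat).
Variables (B : 'I_m -> R) (a : 'I_n -> nat) (v rho : 'I_n -> R)
          (w : 'I_n -> 'I_m -> R).

Definition vt (i : 'I_n) (t : nat) : R := v i * (1 - rho i) ^+ (t - a i).

Definition cumul (x : nat -> 'I_n -> R) (i : 'I_n) (t : nat) : R :=
  \sum_(1 <= tau < t.+1) x tau i.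

Definition valid_instance : Prop :=
  [/\ forall j, 0 < B j,
      forall i, (1 <= a i)%N,
      forall i, 0 <= v i,
      forall i, 0 <= rho i <= 1
    & forall i j, 0 <= w i j].

Definition frac_alloc (x : nat -> 'I_n -> R) : Prop :=
  [/\ forall t i, 0 <= x t i <= 1,
      forall t i, (t < a i)%N -> x t i = 0,
      forall i T, cumul x i T <= 1
    & forall t j, \sum_i w i j * x t i <= B j].

(* feasibility for the LP solved by the greedy algorithm at block t,
   given the previous allocation x (only x tau for tau < t matters) *)
Definition greedy_feasible (x : nat -> 'I_n -> R) (t : nat) (z : 'I_n -> R) : Prop :=
  [/\ forall i, 0 <= z i,
      forall i, z i <= 1 - cumul x i t.-1,
      forall j, \sum_i w i j * z i <= B j
    & forall i, (t < a i)%N -> z i = 0].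

Definition greedy_output (x : nat -> 'I_n -> R) : Prop :=
  forall t, (1 <= t)%N ->
    greedy_feasible x t (x t) /\
    forall z, greedy_feasible x t z ->
      \sum_i z i * vt i t <= \sum_i x t i * vt i t.

End Defs.

From mathcomp Require Import all_boot all_order all_algebra.
Import Order.TTheory GRing.Theory Num.Theory.
Set Implicit Arguments. Unset Strict Implicit. Unset Printing Implicit Defensive.
Local Open Scope ring_scope.

(* The allocation that follows y, scaled down in each coordinate by the share
   1 - X_i^{*t-1} the greedy algorithm has left unallocated, is feasible for
   the greedy LP at block t; optimality of x^{*t} then gives the bound. *)

Section GreedyFractional.

Variables (R : realFieldType) (n m : nat).
Variables (B : 'I_m -> R) (a : 'I_n -> nat) (w : 'I_n -> 'I_m -> R).

Lemma cumul_greedy_feasible_bounds (x : nat -> 'I_n -> R) :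
  (forall t, (1 <= t)%N -> greedy_feasible B a w x t (x t)) ->
  forall i t, 0 <= cumul x i t <= 1.
Proof.
move=> feas i; elim=> [|t /andP[X0 X1]].
  by rewrite /cumul big_geq // lexx ler01.
have [x_ge0 x_le_residual _ _] := feas t.+1 isT.
rewrite /cumul big_nat_recr //= -/(cumul x i t).
by rewrite addr_ge0 ?x_ge0 //= -lerBrDl x_le_residual.
Qed.

Lemma onem_bounds (c : R) : 0 <= c <= 1 -> 0 <= 1 - c <= 1.
Proof. by case/andP=> c0 c1; rewrite subr_ge0 c1 lerBlDr lerDl. Qed.

Lemma greedy_feasible_residual_scaled (x y : nat -> 'I_n -> R) t :
  (forall i j, 0 <= w i j) ->
  (forall i, 0 <= cumul x i t.-1 <= 1) ->
  frac_alloc B a w y ->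
  greedy_feasible B a w x t (fun i => (1 - cumul x i t.-1) * y t i).
Proof.
move=> w_ge0 X01 [y01 y_early _ y_packs].
have r01 i := onem_bounds (X01 i).
split=> [i | i | j | i t_early].
- by have /andP[r0 _] := r01 i; have /andP[y0 _] := y01 t i; exact: mulr_ge0.
- have /andP[r0 _] := r01 i; have /andP[_ y1] := y01 t i.
  by rewrite -[leRHS]mulr1 ler_wpM2l.
- apply: le_trans (y_packs t j); apply: ler_sum => i _.
  have /andP[_ r1] := r01 i; have /andP[y0 _] := y01 t i.
  by rewrite ler_wpM2l // -[leRHS]mul1r ler_wpM2r.
- by rewrite y_early // mulr0.
Qed.

End GreedyFractional.

Theorem lemma1 (R : realFieldType) (n m : nat)
    (B : 'I_m -> R) (a : 'I_n -> nat) (v rho : 'I_n -> R) (w : 'I_n -> 'I_m -> R)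
    (xs y : nat -> 'I_n -> R) :
  valid_instance B a v rho w ->
  greedy_output B a v rho w xs ->
  frac_alloc B a w y ->
  forall t : nat, (1 <= t)%N ->
    \sum_i xs t i * vt a v rho i t >=
    \sum_i (1 - cumul xs i t.-1) * y t i * vt a v rho i t.
Proof.
move=> [_ _ _ _ w_ge0] greedy y_alloc t t_ge1.
have X01 := cumul_greedy_feasible_bounds (fun s s_ge1 => (greedy s s_ge1).1).
have [_ optimal] := greedy t t_ge1.
apply: optimal.
exact: greedy_feasible_residual_scaled.
Qed.
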